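(* Let $X$ be a real reflexive Banach space and $f:X\to\mathbb{R}\cup\{+\infty\}$ a lower semicontinuous proper convex function, and let $f^{FY}(x,x^{\ast}):=f(x)+f^{\ast}(x^{\ast})$ on $X\times X^{\ast}$. Then for every $\epsilon\ge0$ and $x\in X$, $\partial_\epsilon f(x)=\breve{T}_{f^{FY}}(\epsilon,x)$, i.e. $\partial_\epsilon f(x)=\{x^{\ast}\in X^{\ast}:(x^{\ast},x)\in\partial_{2\epsilon}f^{FY}(x,x^{\ast})\}$.
   Context: $X^{\ast}$ is the dual of $X$ with pairing $\langle\cdot,\cdot\rangle$; $f^{\ast}(x^{\ast})=\sup_x\{\langle x,x^{\ast}\rangle-f(x)\}$. For $\epsilon\ge0$, $\partial_\epsilon f(x)=\{x^{\ast}: f(y)-f(x)\ge\langle y-x,x^{\ast}\rangle-\epsilon\ \forall y\in X\}$ if $f(x)<\infty$, and $\emptyset$ otherwise. The dual of $X\times X^{\ast}$ is identified with $X^{\ast}\times X$ via $\langle (x,x^{\ast}),(y^{\ast},y)\rangle=\langle x,y^{\ast}\rangle+\langle y,x^{\ast}\rangle$; for $g:X\times X^{\ast}\to\mathbb{R}\cup\{+\infty\}$ and $\eta\ge0$, $\partial_\eta g(z)$ is the set of $(y^{\ast},y)\in X^{\ast}\times X$ with $g(w,w^{\ast})\ge g(z)+\langle (w,w^{\ast})-z,(y^{\ast},y)\rangle-\eta$ for all $(w,w^{\ast})$ when $g(z)<\infty$, and $\emptyset$ otherwise. For such $g$, $\breve{T}_g(\epsilon,x):=\{x^{\ast}:(x^{\ast},x)\in\partial_{2\epsilon}g(x,x^{\ast})\}$.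 *)

From HB Require Import structures.
From mathcomp Require Import all_boot all_order all_algebra.
From mathcomp Require Import all_classical all_reals all_analysis.
Set Implicit Arguments. Unset Strict Implicit. Unset Printing Implicit Defensive.
Import Order.TTheory GRing.Theory Num.Theory.
Import numFieldNormedType.Exports.
Local Open Scope classical_set_scope.
Local Open Scope ring_scope.

Record dual (R : realType) (X : normedModType R) := Dual {
  dfun :> X -> R;
  dfun_linear : forall (a : R) (u v : X), dfun (a *: u + v) = a * dfun u + dfun v;
  dfun_cont : continuous dfun }.

(* Reflexivity: every bounded (= continuous) linear functional phi on the
   normed space X^* (dual norm ||x*|| = sup_{||u||<=1} |x*(u)|) is the
   evaluation at some x in X, i.e. the canonical embedding X -> X^** is onto. *)
Definition reflexive_space (R : realType) (X : normedModType R) : Prop :=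
  forall phi : dual X -> R,
    (forall (a : R) (s1 s2 s3 : dual X),
        (forall u, s3 u = a * s1 u + s2 u) -> phi s3 = a * phi s1 + phi s2) ->
    (exists C : R, forall s : dual X,
        (forall u, `|s u| <= `|u|) -> `|phi s| <= C) ->
    exists x : X, forall s : dual X, phi s = s x.

Local Open Scope ereal_scope.

Definition proper_fun (R : realType) (X : normedModType R) (f : X -> \bar R) :=
  (exists x, f x < +oo) /\ (forall x, f x != -oo).

Definition convex_fun (R : realType) (X : normedModType R) (f : X -> \bar R) :=
  forall (x y : X) (t : R), (0 < t)%R -> (t < 1)%R ->
    f (t *: x + (1 - t) *: y)%R <= t%:E * f x + (1 - t)%:E * f y.

Definition fconj (R : realType) (X : normedModType R) (f : X -> \bar R)
  (s : dual X) : \bar R :=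
  ereal_sup [set (s x)%:E - f x | x in setT].

Definition esubdiff (R : realType) (X : normedModType R) (f : X -> \bar R)
  (eps : R) (x : X) : set (dual X) :=
  [set s : dual X | f x < +oo /\ forall y : X, f y - f x >= ((s (y - x)%R) - eps)%:E].

(* eta-subdifferential of g : X x X^* -> \bar R at z, as a subset of X^* x X,
   using the pairing <(w,ws),(ys,y)> = ys(w) + ws(y). *)
Definition esubdiff2 (R : realType) (X : normedModType R)
  (g : X * dual X -> \bar R) (eta : R) (z : X * dual X) : set (dual X * X) :=
  [set p : dual X * X | g z < +oo /\
     forall w : X * dual X,
       g w >= g z + ((p.1 (w.1 - z.1)%R + (w.2 p.2 - z.2 p.2)) - eta)%:E].

Definition Tbreve (R : realType) (X : normedModType R)
  (g : X * dual X -> \bar R) (eps : R) (x : X) : set (dual X) :=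
  [set s : dual X | esubdiff2 g (2 * eps) (x, s) (s, x)].

Definition fFY (R : realType) (X : normedModType R) (f : X -> \bar R)
  (z : X * dual X) : \bar R := f z.1 + fconj f z.2.

From mathcomp Require Import all_boot all_order all_algebra.
From mathcomp Require Import all_classical all_reals all_analysis.
From mathcomp Require Import ring lra.
Set Implicit Arguments. Unset Strict Implicit. Unset Printing Implicit Defensive.
Import Order.TTheory GRing.Theory Num.Theory.
Import numFieldNormedType.Exports.
Local Open Scope classical_set_scope.
Local Open Scope ring_scope.

(* s is an eps-subgradient of f at x iff the Fenchel-Young gap
   f x + f^* s - s x is at most eps.  If it is, adding the Fenchel-Young
   inequalities at (w, s) and at (x, ws) yields the 2 eps-subgradient
   inequality of f^FY at (x, s).  Conversely, testing that inequality at
   (y, ws) with ws an e-subgradient of f at x bounds the gap by eps + e / 2;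
   such ws exist for every e > 0 because a convex function that is lower
   semicontinuous at x has nonempty e-subdifferentials there, which follows
   by separating (x, f x - e) from a thickened epigraph of f with the
   analytic Hahn-Banach theorem applied to the Minkowski gauge. *)

Section LinearGraph.
Variables (R : realType) (V : lmodType R).

Definition linear_graph (G : set (V * R)) :=
  [/\ G (0, 0),
      (forall a u x v y, G (u, x) -> G (v, y) -> G (a *: u + v, a * x + y)) &
      (forall u x y, G (u, x) -> G (u, y) -> x = y)].

Definition graph_extension (M : set (V * R)) (v : V) (c : R) :=
  [set z | exists u a t, M (u, a) /\ z = (u + t *: v, a + t * c)].

Lemma sub_graph_extension M v c : M `<=` graph_extension M v c.
Proof. by move=> [u a] Mz; exists u, a, 0; rewrite scale0r mul0r !addr0. Qed.

Lemma linear_graph_extension M v c : linear_graph M -> (forall x, ~ M (v, x)) ->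
  linear_graph (graph_extension M v c).
Proof.
move=> [M0 Mcl Mfun] vn; split.
- by exists 0, 0, 0; rewrite scale0r addr0 mul0r addr0.
- move=> a u x w y [u1 [a1 [t1 [M1 [-> ->]]]]] [u2 [a2 [t2 [M2 [-> ->]]]]].
  exists (a *: u1 + u2), (a * a1 + a2), (a * t1 + t2); split; first exact: Mcl.
  congr pair; first by rewrite scalerDr scalerDl scalerA addrACA.
  by rewrite mulrDr mulrDl mulrA addrACA.
- move=> w x y [u1 [a1 [t1 [M1 [E1 ->]]]]] [u2 [a2 [t2 [M2 [E2 ->]]]]].
  have E : u1 + t1 *: v = u2 + t2 *: v by rewrite -E1 -E2.
  have [et|t12] := eqVneq t1 t2.
    rewrite -et in E M2 *; have Eu : u1 = u2 by apply: (addIr (t1 *: v)).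
    by rewrite -Eu in M2; rewrite (Mfun _ _ _ M1 M2).
  have Mv := Mcl (t1 - t2)^-1 _ _ _ _ (Mcl (-1) _ _ _ _ M1 M2) M0.
  suff Ev : (t1 - t2)^-1 *: (-1 *: u1 + u2) + 0 = v.
    by exfalso; apply: (vn ((t1 - t2)^-1 * (-1 * a1 + a2) + 0)); rewrite -{1}Ev.
  have -> : u2 = u1 + (t1 - t2) *: v by rewrite scalerBl addrA E addrK.
  rewrite scaleN1r addrA addNr add0r addr0 scalerA mulVf ?scale1r //.
  by rewrite subr_eq0.
Qed.

End LinearGraph.

Section HahnBanach.
Variables (R : realType) (V : lmodType R) (p : V -> R).
Hypothesis p_subadd : forall u v, p (u + v) <= p u + p v.
Hypothesis p_homo : forall a u, 0 < a -> a * p u <= p (a *: u).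
Hypothesis p_ge0 : forall u, 0 <= p u.

Definition dominated_graph (G : set (V * R)) :=
  linear_graph G /\ forall u x, G (u, x) -> x <= p u.

Lemma sublinear0 : p 0 = 0.
Proof.
apply/eqP; rewrite eq_le p_ge0 andbT.
have := @p_homo 2 0 (ltr0Sn _ 1); rewrite scaler0.
have := p_ge0 0; lra.
Qed.

(* The value c on v must lie between the bounds a - p (u - v) and
   p (w + v) - b coming from the graph, which are ordered by subadditivity. *)
Lemma dominated_graph_extend (M : set (V * R)) (v : V) :
  dominated_graph M -> (forall x, ~ M (v, x)) ->
  exists c, dominated_graph (graph_extension M v c).
Proof.
move=> [linM Mdom] vn; have [M0 Mcl _] := linM.
pose S := [set z | exists u a, M (u, a) /\ z = a - p (u - v)].
have bounds u a w b : M (u, a) -> M (w, b) -> a - p (u - v) <= p (w + v) - b.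
  move=> Mu Mw; have := Mdom _ _ (Mcl 1 _ _ _ _ Mu Mw); rewrite scale1r mul1r.
  have := p_subadd (u - v) (w + v).
  have -> : u - v + (w + v) = u + w by rewrite addrACA addNr addr0.
  lra.
have S0 : S !=set0 by exists (0 - p (0 - v)), 0, 0.
have supS : has_sup S.
  by split=> //; exists (p (0 + v) - 0) => z [u [a [Mu ->]]]; exact: bounds.
have c_ge u a : M (u, a) -> a - p (u - v) <= sup S.
  by move=> Mu; apply: sup_upper_bound => //; exists u, a.
have c_le w b : M (w, b) -> sup S <= p (w + v) - b.
  by move=> Mw; apply: ge_sup => // z [u [a [Mu ->]]]; exact: bounds.
exists (sup S); split; first exact: linear_graph_extension.
move=> w x [u [a [t [Mu [-> ->]]]]].
have [t0|t0|->] := ltgtP t 0; last first.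
- by rewrite scale0r mul0r !addr0; exact: Mdom.
- have := c_le _ _ (Mcl t^-1 _ _ _ _ Mu M0); rewrite !addr0 => h.
  have := @p_homo t (t^-1 *: u + v) t0.
  rewrite scalerDr scalerA mulfV ?gt_eqF // scale1r.
  have : t * sup S <= t * (p (t^-1 *: u + v) - t^-1 * a) by rewrite ler_pM2l.
  rewrite mulrBr mulrA mulfV ?gt_eqF // mul1r; lra.
- set s := - t; have s0 : 0 < s by rewrite /s oppr_gt0.
  have := c_ge _ _ (Mcl s^-1 _ _ _ _ Mu M0); rewrite !addr0 => h.
  have := @p_homo s (s^-1 *: u - v) s0.
  rewrite scalerDr scalerA mulfV ?gt_eqF // scale1r scalerN.
  have : s * (s^-1 * a - p (s^-1 *: u - v)) <= s * sup S by rewrite ler_pM2l.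
  rewrite mulrBr mulrA mulfV ?gt_eqF // mul1r.
  have -> : u + t *: v = u - s *: v by rewrite /s scaleNr opprK.
  have -> : a + t * sup S = a - s * sup S by rewrite /s mulNr opprK.
  lra.
Qed.

Lemma dominated_graph_line (w0 : V) : 1 <= p w0 ->
  dominated_graph [set z | exists t, z = (t *: w0, t)].
Proof.
move=> pw0; have w0n : w0 != 0.
  by apply: contraTneq pw0 => ->; rewrite sublinear0 ler10.
split; first split.
- by exists 0; rewrite scale0r.
- move=> a u x v y [t1 [-> ->]] [t2 [-> ->]].
  by exists (a * t1 + t2); rewrite scalerDl scalerA.
- move=> u x y [t1 [-> ->]] [t2 [Eu ->]].
  apply/eqP; rewrite -subr_eq0.
  have : (t1 - t2) *: w0 == 0 by rewrite scalerBl Eu subrr.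
  by rewrite scaler_eq0 (negbTE w0n) orbF.
- move=> u x [t [-> ->]]; have [t0|t0] := ltP 0 t.
    have := @p_homo t w0 t0; have : t <= t * p w0 by rewrite ler_peMr // ltW.
    lra.
  have := p_ge0 (t *: w0); lra.
Qed.

(* Any two points of the union already lie in one member of the chain. *)
Lemma dominated_graph_chain (G0 : set (V * R)) (F : set (set (V * R))) :
  dominated_graph G0 -> (forall G, F G -> dominated_graph (G `|` G0)) ->
  total_on F subset -> dominated_graph ((\bigcup_(G in F) G) `|` G0).
Proof.
move=> domG0 domF Ftot; set U := _ `|` G0.
have common z1 z2 : U z1 -> U z2 ->
    exists H, [/\ dominated_graph H, H z1, H z2 & H `<=` U].
  have subU G : F G -> G `|` G0 `<=` U.
    by move=> FG z [Gz|G0z]; [left; exists G|right].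
  move=> [[G1 FG1 G1z]|G0z1] [[G2 FG2 G2z]|G0z2].
  - have [G12|G21] := Ftot _ _ FG1 FG2.
      exists (G2 `|` G0); split; [exact: domF|left; exact: G12|by left|].
      exact: subU.
    exists (G1 `|` G0); split; [exact: domF|by left|left; exact: G21|].
    exact: subU.
  - by exists (G1 `|` G0); split; [exact: domF|left|right|exact: subU].
  - by exists (G2 `|` G0); split; [exact: domF|right|left|exact: subU].
  - by exists G0; split => // z G0z; right.
split; first split.
- by right; case: domG0 => -[].
- move=> a u x v y U1 U2; have [H [[[_ Hcl _] _] H1 H2 HU]] := common _ _ U1 U2.
  exact/HU/Hcl.
- move=> u x y U1 U2; have [H [[[_ _ Hf] _] H1 H2 _]] := common _ _ U1 U2.
  exact: Hf H1 H2.
- move=> u x U1; have [H [[_ Hd] H1 _ _]] := common _ _ U1 U1.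
  exact: Hd.
Qed.

(* Zorn's lemma gives a maximal dominated graph through the line R w0; by
   dominated_graph_extend it is defined everywhere. *)
Theorem hahn_banach (w0 : V) : 1 <= p w0 ->
  exists L : V -> R, [/\ forall a u v, L (a *: u + v) = a * L u + L v,
    forall u, L u <= p u & L w0 = 1].
Proof.
move=> pw0; set G0 := [set z | exists t, z = (t *: w0, t)].
have domG0 : dominated_graph G0 by exact: dominated_graph_line.
pose P := [set G | dominated_graph (G `|` G0)].
have [A [PA Amax]] : exists A, P A /\ forall B, A `<` B -> ~ P B.
  by apply: Zorn_bigcup => F FP Ftot; exact: dominated_graph_chain.
set M := A `|` G0 in PA.
have Mtotal v : exists x, M (v, x).
  apply: contrapT => nv.
  have vn x : ~ M (v, x) by move=> Mx; apply: nv; exists x.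
  have [c domB] := @dominated_graph_extend M v PA vn.
  have MB := @sub_graph_extension _ _ M v c.
  apply: (Amax (graph_extension M v c)).
    rewrite properEneq; split; last by move=> z Az; apply: MB; left.
    apply/eqP => AB; apply: (vn c); left; rewrite AB.
    by exists 0, 0, 1; split; [case: PA => -[]|rewrite scale1r mul1r !add0r].
  suff BG0 : graph_extension M v c `|` G0 = graph_extension M v c.
    by rewrite /P /= BG0.
  by apply/setUidPl => z G0z; apply: MB; right.
have [L ML] := choice Mtotal; case: PA => -[_ Mcl Mfun] Mdom.
exists L; split.
- move=> a u v; apply: (Mfun _ _ _ (ML _)).
  exact: Mcl a _ _ _ _ (ML u) (ML v).
- by move=> u; exact: Mdom (ML u).
- by apply: (Mfun _ _ _ (ML w0)); right; exists 1; rewrite scale1r.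
Qed.

End HahnBanach.

Definition gauge (R : realType) (V : lmodType R) (K : set V) (w : V) : R :=
  inf [set l : R | 0 < l /\ K (l^-1 *: w)].

Section MinkowskiGauge.
Variables (R : realType) (V : lmodType R) (K : set V).
Hypothesis K_convex : forall a b (l : R), 0 <= l <= 1 -> K a -> K b ->
  K (l *: a + (1 - l) *: b).
Hypothesis K_absorbing : forall w, exists2 l : R, 0 < l & K (l^-1 *: w).

Let S w := [set l : R | 0 < l /\ K (l^-1 *: w)].

Let S_neq0 w : S w !=set0.
Proof. by have [l l0 Kl] := K_absorbing w; exists l. Qed.

Let S_lbound w : has_lbound (S w).
Proof. by exists 0 => l [l0 _]; exact: ltW. Qed.

Lemma gauge_ge0 w : 0 <= gauge K w.
Proof. by apply: lb_le_inf; [exact: S_neq0|move=> l [l0 _]; exact: ltW]. Qed.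

Lemma gauge_le w l : 0 < l -> K (l^-1 *: w) -> gauge K w <= l.
Proof. by move=> l0 Kl; apply: ge_inf; [exact: S_lbound|split]. Qed.

Lemma gauge_homo a u : 0 < a -> a * gauge K u <= gauge K (a *: u).
Proof.
move=> a0; apply: lb_le_inf; first exact: S_neq0.
move=> l [l0 Kl]; rewrite -ler_pdivlMl //.
apply: gauge_le; first by rewrite mulr_gt0 ?invr_gt0.
by rewrite invfM invrK mulrC -scalerA.
Qed.

(* u + w = (l + m) (th (u / l) + (1 - th) (w / m)) with th = l / (l + m). *)
Lemma gauge_subadd u w : gauge K (u + w) <= gauge K u + gauge K w.
Proof.
have sum_mem l m : S u l -> S w m -> S (u + w) (l + m).
  move=> [l0 Ku] [m0 Kw]; have lm0 : 0 < l + m by exact: addr_gt0.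
  split=> //; pose th := l / (l + m).
  have -> : (l + m)^-1 *: (u + w) = th *: (l^-1 *: u) + (1 - th) *: (m^-1 *: w).
    rewrite !scalerA scalerDr; congr (_ *: _ + _ *: _); rewrite /th; field.
      by rewrite !gt_eqF.
    by rewrite !gt_eqF.
  apply: K_convex => //; rewrite /th divr_ge0 ?ltW //=.
  by rewrite ltr_pdivrMr // mul1r ltrDl.
rewrite -lerBlDr; apply: lb_le_inf; first exact: S_neq0.
move=> l Sl; rewrite lerBlDl -lerBlDr.
apply: lb_le_inf; first exact: S_neq0.
move=> m Sm; rewrite lerBlDr [m + l]addrC.
by have [lm0 Klm] := sum_mem _ _ Sl Sm; exact: gauge_le.
Qed.

Lemma gauge_ge1 w : K 0 -> ~ K w -> 1 <= gauge K w.
Proof.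
move=> K0 Kw; apply: lb_le_inf; first exact: S_neq0.
move=> l [l0 Kl]; rewrite leNgt; apply/negP => l1; apply: Kw.
have l01 : 0 <= l <= 1 by rewrite !ltW.
have := K_convex l01 Kl K0.
by rewrite scalerA mulfV ?gt_eqF // scale1r scaler0 addr0.
Qed.

Lemma gauge_separation w0 : K 0 -> ~ K w0 ->
  exists L : V -> R, [/\ forall a u v, L (a *: u + v) = a * L u + L v,
    forall u, L u <= gauge K u & L w0 = 1].
Proof.
move=> K0 Kw0; apply: hahn_banach; [exact: gauge_subadd|exact: gauge_homo|
  exact: gauge_ge0|exact: gauge_ge1].
Qed.

End MinkowskiGauge.

Section LinearFunctional.
Variables (R : realType) (V : lmodType R) (L : V -> R).
Hypothesis L_lin : forall a u v, L (a *: u + v) = a * L u + L v.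

Lemma linear_fun0 : L 0 = 0.
Proof. have := L_lin 1 0 0; rewrite scale1r addr0 mul1r; lra. Qed.

Lemma linear_funN u : L (- u) = - L u.
Proof.
by have := L_lin (-1) u 0; rewrite linear_fun0 !addr0 scaleN1r mulN1r.
Qed.

Lemma linear_funB u v : L (u - v) = L u - L v.
Proof. by rewrite -scaleN1r addrC L_lin mulN1r addrC. Qed.

End LinearFunctional.

Lemma bounded_linear_fun_continuous (R : realType) (V : normedModType R)
    (L : V -> R) (C : R) :
  (forall a u v, L (a *: u + v) = a * L u + L v) ->
  (forall u, `|L u| <= C * `|u|) -> continuous L.
Proof.
move=> L_lin LC z; apply/cvgrPdist_lt => e e0.
have C1 : 0 < `|C| + 1 by rewrite ltr_wpDl.
apply/nbhs_ballP; exists (e / (`|C| + 1)); first exact: divr_gt0.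
move=> y; rewrite -ball_normE /= -linear_funB // => zy.
apply: (le_lt_trans (LC _)).
apply: (le_lt_trans (ler_wpM2r (normr_ge0 _) (ler_norm C))).
rewrite ltr_pdivlMr // in zy.
have := normr_ge0 (z - y); have := normr_ge0 C; nra.
Qed.

Lemma convex_combB (R : realType) (V : lmodType R) (l : R) (a b c e : V) :
  l *: a + (1 - l) *: b - (l *: c + (1 - l) *: e) =
  l *: (a - c) + (1 - l) *: (b - e).
Proof. by rewrite !scalerBr opprD addrACA. Qed.

Lemma convex_norm_lt (R : realType) (V : normedModType R) (l rho : R)
    (a b : V) :
  0 <= l <= 1 -> `|a| < rho -> `|b| < rho -> `|l *: a + (1 - l) *: b| < rho.
Proof.
move=> /andP[l0 l1] ha hb; apply: (le_lt_trans (ler_normD _ _)).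
rewrite !normrZ (ger0_norm l0) (@ger0_norm _ (1 - l)); last by lra.
have := normr_ge0 a; have := normr_ge0 b; have [lh|lh] := leP l (1 / 2); nra.
Qed.

Local Open Scope ereal_scope.

Lemma convex_fun_le (R : realType) (X : normedModType R) (f : X -> \bar R)
    (y1 y2 : X) (t1 t2 l : R) :
  convex_fun f -> (forall x, f x != -oo) -> (0 <= l <= 1)%R ->
  f y1 <= t1%:E -> f y2 <= t2%:E ->
  f (l *: y1 + (1 - l) *: y2)%R <= (l * t1 + (1 - l) * t2)%:E.
Proof.
move=> f_cvx f_nninf /andP[l0 l1] h1 h2.
have [->|ln0] := eqVneq l 0%R.
  by rewrite scale0r add0r subr0 scale1r mul0r add0r mul1r.
have [->|ln1] := eqVneq l 1%R.
  by rewrite subrr scale0r addr0 scale1r mul0r addr0 mul1r.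
have lp : (0 < l)%R by rewrite lt_neqAle eq_sym ln0.
have lq : (l < 1)%R by rewrite lt_neqAle ln1.
apply: le_trans; first exact: f_cvx y1 y2 l lp lq.
move: h1 h2 (f_nninf y1) (f_nninf y2).
case: (f y1) => [F1| |] //; case: (f y2) => [F2| |] // h1 h2 _ _.
rewrite -!EFinM -EFinD lee_fin; rewrite !lee_fin in h1 h2; nra.
Qed.

Local Close Scope ereal_scope.

Section Subgradient.
Variables (R : realType) (X : normedModType R) (f : X -> \bar R).
Hypotheses (f_convex : convex_fun f) (f_nninf : forall x, f x != -oo%E).
Variables (x0 : X) (r d rho : R).
Hypotheses (fx0 : f x0 = r%:E) (d_gt0 : 0 < d) (rho_gt0 : 0 < rho).
Hypothesis f_gt_ball :
  forall e : X, `|e| < rho -> ((r - d / 2)%:E < f (x0 + e)%R)%E.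

(* The epigraph of f, translated so that (x0, r) is the origin and thickened
   by an open box: a convex neighbourhood of 0 that misses (0, - d). *)
Definition epi_nbhd (w : X * R) := exists e t,
  [/\ (f (x0 + e)%R <= (r + t)%:E)%E, `|w.1 - e| < rho & `|w.2 - t| < d / 2].

Lemma epi_nbhd_convex a b l : 0 <= l <= 1 ->
  epi_nbhd a -> epi_nbhd b -> epi_nbhd (l *: a + (1 - l) *: b).
Proof.
move=> l01 [e1 [t1 [f1 n1 m1]]] [e2 [t2 [f2 n2 m2]]].
exists (l *: e1 + (1 - l) *: e2), (l * t1 + (1 - l) * t2); split.
- have -> : x0 + (l *: e1 + (1 - l) *: e2) =
             l *: (x0 + e1) + (1 - l) *: (x0 + e2).
    by rewrite !scalerDr addrACA -scalerDl [l + _]addrC subrK scale1r.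
  have -> : r + (l * t1 + (1 - l) * t2) = l * (r + t1) + (1 - l) * (r + t2).
    by ring.
  exact: convex_fun_le.
- by rewrite /= convex_combB; exact: convex_norm_lt.
- by rewrite /= convex_combB; exact: (@convex_norm_lt R R^o).
Qed.

Lemma epi_nbhd_box w : `|w.1| < rho -> `|w.2| < d / 2 -> epi_nbhd w.
Proof. by move=> h1 h2; exists 0, 0; rewrite !subr0 !addr0 fx0. Qed.

Lemma epi_nbhd_absorbing w : exists2 l, 0 < l & epi_nbhd (l^-1 *: w).
Proof.
have d2 : 0 < d / 2 by rewrite divr_gt0.
have n1 := normr_ge0 w.1; have n2 := normr_ge0 w.2.
pose a := (`|w.1| + 1) / rho; pose b := (`|w.2| + 1) / (d / 2).
have a0 : 0 < a by rewrite divr_gt0 // ltr_wpDl.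
have b0 : 0 < b by rewrite divr_gt0 // ltr_wpDl.
have l0 : 0 < a + b by exact: addr_gt0.
exists (a + b) => //; apply: epi_nbhd_box => /=.
  rewrite normrZ gtr0_norm ?invr_gt0 // ltr_pdivrMl // mulrDl.
  by rewrite /a divfK ?gt_eqF // ltr_wpDr ?ltrDl // mulr_ge0 // ltW.
rewrite normrM gtr0_norm ?invr_gt0 // ltr_pdivrMl // mulrDl.
by rewrite /b divfK ?gt_eqF // ltr_wpDl ?ltrDl // mulr_ge0 // ltW.
Qed.

Lemma epi_nbhd_notin : ~ epi_nbhd (0, - d).
Proof.
move=> [e [t [fe n1 n2]]]; move: n1; rewrite /= sub0r normrN => /f_gt_ball fgt.
move: n2; rewrite /= ltr_norml => /andP[n2 _].
have := lt_le_trans fgt fe; rewrite lte_fin; lra.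
Qed.

Lemma gauge_epi_nbhd_line y : gauge epi_nbhd (y, 0) <= `|y| / rho.
Proof.
apply/ler_addgt0Pr => e e0; have m0 : 0 < `|y| / rho + e.
  by rewrite ltr_wpDl // divr_ge0 // ltW.
apply: gauge_le => //; apply: epi_nbhd_box => /=.
  rewrite normrZ gtr0_norm ?invr_gt0 // ltr_pdivrMl // mulrDl divfK ?gt_eqF //.
  by rewrite ltrDl mulr_gt0.
by rewrite scaler0 normr0 divr_gt0.
Qed.

Lemma gauge_epi_nbhd_graph y F :
  f y = F%:E -> gauge epi_nbhd (y - x0, F - r) <= 1.
Proof.
move=> fy; apply: gauge_le => //; rewrite invr1 scale1r.
exists (y - x0), (F - r); split => /=; last 2 first.
- by rewrite subrr normr0.
- by rewrite subrr normr0 divr_gt0.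
by rewrite addrC subrK fy addrC subrK.
Qed.

(* Separating (0, - d) from epi_nbhd gives L with L (0, - d) = 1 and L <= 1 on
   the epigraph; -d L (., 0) is then an approximate subgradient. *)
Lemma approx_subgradient : exists s : dual X,
  forall y, ((s (y - x0) - d)%:E <= f y - f x0)%E.
Proof.
have K0 : epi_nbhd 0 by apply: epi_nbhd_box; rewrite normr0 // divr_gt0.
have [L [L_lin L_gauge Lw0]] :=
  gauge_separation epi_nbhd_convex epi_nbhd_absorbing K0 epi_nbhd_notin.
pose phi y := L (y, 0); pose c := L (0, 1).
have L_split y t : L (y, t) = t * c + phi y.
  have -> : (y, t) = t *: ((0 : X), (1 : R)) + (y, 0).
    apply: injective_projections => /=; rewrite ?scaler0 ?add0r //.
    by rewrite addr0 [RHS]mulr1.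
  by rewrite L_lin.
have dc : d * c = -1.
  by move: Lw0; rewrite L_split /phi (linear_fun0 L_lin) mulNr; lra.
have phi_lin a u v : phi (a *: u + v) = a * phi u + phi v.
  rewrite /phi -L_lin; congr L.
  by apply: injective_projections => /=; rewrite ?mulr0 ?scaler0 ?addr0.
have phi_bound y : `|phi y| <= `|y| / rho.
  have phi_le u : phi u <= `|u| / rho.
    exact: le_trans (L_gauge _) (gauge_epi_nbhd_line u).
  rewrite ler_norml phi_le andbT lerNl -(linear_funN phi_lin) -(normrN y).
  exact: phi_le.
have s_lin a u v : d * phi (a *: u + v) = a * (d * phi u) + d * phi v.
  by rewrite phi_lin; ring.
have s_cont : continuous (fun y => d * phi y).
  apply: (bounded_linear_fun_continuous (C := d / rho)) => // y.
  rewrite normrM (gtr0_norm d_gt0) -mulrA ler_pM2l // mulrC; exact: phi_bound.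
exists (Dual s_lin s_cont) => y /=.
case E: (f y) (f_nninf y) => [F| |] // _; last by rewrite fx0 leey.
have := le_trans (L_gauge _) (gauge_epi_nbhd_graph E); rewrite L_split => h.
rewrite fx0 -EFinB lee_fin.
have : d * ((F - r) * c + phi (y - x0)) <= d * 1 by rewrite ler_pM2l.
by rewrite mulrDr mulrCA dc; lra.
Qed.

End Subgradient.

Lemma esubdiff_neq0 (R : realType) (X : normedModType R) (f : X -> \bar R)
    (eps : R) (x : X) :
  lower_semicontinuous f -> convex_fun f -> (forall y, f y != -oo%E) ->
  (f x < +oo)%E -> 0 < eps -> esubdiff f eps x !=set0.
Proof.
move=> f_lsc f_cvx f_nninf fx eps0.
case E: (f x) fx (f_nninf x) => [r| |] // _ _.
have [W xW fW] :
    exists2 W, nbhs x W & forall y, W y -> ((r - eps / 2)%:E < f y)%E.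
  by apply: f_lsc; rewrite E lte_fin gtrBl divr_gt0.
move/nbhs_ballP : xW => [rho rho0 ballW].
have f_gt_ball e : `|e| < rho -> ((r - eps / 2)%:E < f (x + e)%R)%E.
  move=> e_lt; apply/fW/ballW; rewrite -ball_normE /= opprD addrA subrr add0r.
  by rewrite normrN.
have [s hs] := approx_subgradient f_cvx f_nninf E eps0 rho0 f_gt_ball.
by exists s; split; [rewrite E ltry|move=> y; exact: hs].
Qed.

Section FenchelConjugate.
Variables (R : realType) (X : normedModType R) (f : X -> \bar R).
Local Open Scope ereal_scope.

Lemma fenchel_young (s : dual X) y : (s y)%:E - f y <= fconj f s.
Proof. by apply: ereal_sup_ubound; exists y. Qed.

Lemma ge_fconj (s : dual X) b :
  (forall y, (s y)%:E - f y <= b) -> fconj f s <= b.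
Proof. by move=> h; apply: ge_ereal_sup => _ [y _ <-]; exact: h. Qed.

Hypothesis f_proper : proper_fun f.
Let f_nninf := f_proper.2.

Lemma fconj_nninf (s : dual X) : fconj f s != -oo.
Proof.
case: f_proper => [[x1 fx1] _]; have := fenchel_young s x1.
move: fx1 (f_nninf x1); case: (f x1) => [F1| |] // _ _.
by case: (fconj f s).
Qed.

Lemma esubdiff_fconjE eps x (s : dual X) :
  esubdiff f eps x s <-> f x + fconj f s <= (s x + eps)%:E.
Proof.
have s_lin := dfun_linear s; split.
- case=> + hs; case Ex : (f x) (f_nninf x) => [F| |] // _ _.
  have : fconj f s <= (s x + eps - F)%:E.
    apply: ge_fconj => y; have := hs y; rewrite Ex.
    case: (f y) => [G| |] //= hG; last by rewrite leNye.
    by rewrite -!EFinB !lee_fin (linear_funB s_lin) in hG *; lra.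
  case: (fconj f s) (fconj_nninf s) => [C| |] //= _.
  by rewrite -EFinD !lee_fin; lra.
- case Ex : (f x) (f_nninf x) => [F| |] // _; last first.
    by case: (fconj f s) (fconj_nninf s).
  case EC : (fconj f s) (fconj_nninf s) => [C| |] // _.
  rewrite -EFinD lee_fin => gap; split; first by rewrite Ex ltry.
  move=> y; have := fenchel_young s y; rewrite EC Ex.
  case: (f y) (f_nninf y) => [G| |] //= _; last by rewrite leey.
  by rewrite -EFinB !lee_fin (linear_funB s_lin); lra.
Qed.

Lemma fconj_gap_Tbreve eps x (s : dual X) :
  f x + fconj f s <= (s x + eps)%:E -> Tbreve (fFY f) eps x s.
Proof.
have s_lin := dfun_linear s.
case Ex : (f x) (f_nninf x) => [F| |] // _; last first.
  by case: (fconj f s) (fconj_nninf s).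
case EC : (fconj f s) (fconj_nninf s) => [C| |] // _.
rewrite -EFinD lee_fin => gap; rewrite /Tbreve /esubdiff2 /fFY /= Ex EC.
split; first by rewrite -EFinD ltry.
move=> [w ws] /=; have := fenchel_young s w; have := fenchel_young ws x.
rewrite EC Ex; case: (f w) (f_nninf w) => [W| |] //= _; last first.
  by case: (fconj f ws) (fconj_nninf ws) => [D| |] //= _ _ _; rewrite leey.
case: (fconj f ws) => [D| |] //= hD hC; last by rewrite leey.
rewrite !lee_fin in hD hC; rewrite -!EFinD lee_fin !(linear_funB s_lin); lra.
Qed.

Lemma Tbreve_fconj_gap eps x (s : dual X) :
  lower_semicontinuous f -> convex_fun f ->
  Tbreve (fFY f) eps x s -> f x + fconj f s <= (s x + eps)%:E.
Proof.
move=> f_lsc f_cvx; rewrite /Tbreve /esubdiff2 /fFY /= => -[fin hyp].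
have s_lin := dfun_linear s.
case Ex : (f x) fin (f_nninf x) => [F| |] //; last first.
  by case: (fconj f s) (fconj_nninf s).
move=> + _; case EC : (fconj f s) (fconj_nninf s) => [C| |] // _ _.
rewrite -EFinD lee_fin; apply/ler_addgt0Pr => e e0.
have [ws ws_sub] : esubdiff f e x !=set0.
  by apply: esubdiff_neq0; rewrite ?Ex ?ltry.
have := (esubdiff_fconjE e x ws).1 ws_sub; rewrite Ex.
case ED : (fconj f ws) (fconj_nninf ws) => [D| |] // _.
rewrite -EFinD lee_fin => hD.
have : fconj f s <= (2 * s x + 2 * eps + e - 2 * F - C)%:E.
  apply: ge_fconj => y; have := hyp (y, ws); rewrite /= ED Ex EC.
  case: (f y) (f_nninf y) => [G| |] //= _; last by rewrite addeNy leNye.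
  by rewrite -!EFinD !lee_fin !(linear_funB s_lin); lra.
by rewrite EC lee_fin; lra.
Qed.

End FenchelConjugate.

Theorem corollary3p1 (R : realType) (X : completeNormedModType R)
  (f : X -> \bar R) :
  reflexive_space X -> lower_semicontinuous f -> proper_fun f -> convex_fun f ->
  forall (eps : R) (x : X), 0 <= eps -> esubdiff f eps x = Tbreve (fFY f) eps x.
Proof.
move=> _ f_lsc f_proper f_cvx eps x _; apply/seteqP; split => s.
- by move/(esubdiff_fconjE f_proper); exact: fconj_gap_Tbreve.
- by move/(Tbreve_fconj_gap f_proper f_lsc f_cvx)/(esubdiff_fconjE f_proper).
Qed.
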